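(* Let $p>3$ be prime, $t\in\{1,3,p,3p\}$, and $1\le r\le 3p-1$ with $\gcd(r,3p)=1$. Then \[\Lambda(3,r,t)=\begin{cases}\Delta(|r|_p) & \text{if } r\equiv1\pmod 3\text{ and } t\in\{3,3p\},\\ \Delta\!\left(\frac{|r|_p}{\gcd(3,|r|_p)}\right) & \text{if } r\equiv 1\pmod 3\text{ and } t\in\{1,p\},\\ \Delta\!\left(\frac{|r|_p}{\gcd(2,|r|_p)}\right) & \text{if } r\equiv 2\pmod 3.\end{cases}\]
   Context: $|r|_m$ is the multiplicative order of $r$ modulo $m$ (with $|r|_1=1$). $S_k(x):=1+x+\cdots+x^{k-1}$, $S_0:=0$. For $m\ge1$ with $\gcd(r,m)=1$, $\kappa(m,r,t):=\dfrac{m|r|_m}{\gcd(m,\,tS_{|r|_m}(r))}$. For $d\in\{1,3,p,3p\}$, $\Lambda(d,r,t):=\{\ell>0:\ \ell \text{ divides } \frac{|r|_{3p}}{\gcd(\kappa(d,r,t),|r|_{3p})}\text{ and }\gcd(r^{\ell\kappa(d,r,t)}-1,3p)=d\}$. For a positive integer $m$, $\Delta(m):=\{\ell: 0<\ell<m,\ \ell\mid m\}$. *)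

From mathcomp Require Import all_boot.
Set Implicit Arguments. Unset Strict Implicit. Unset Printing Implicit Defensive.

(* |r|_m : multiplicative order of r modulo m, i.e. the least k >= 1 with
   r^k = 1 (mod m).  For gcd(r,m)=1 this k is <= totient m <= m, so searching
   k in 1..m suffices; for m = 1 this gives 1 (matching |r|_1 = 1). *)
Definition mord (m r : nat) : nat :=
  (find (fun k => r ^ k.+1 == 1 %[mod m]) (iota 0 m)).+1.

Definition Ssum (k x : nat) : nat := \sum_(i < k) x ^ i.

Definition kappa (m r t : nat) : nat :=
  (m * mord m r) %/ gcdn m (t * Ssum (mord m r) r).

Definition Lambda (p d r t : nat) : pred nat :=
  fun l => [&& 0 < l,
               l %| mord (3 * p) r %/ gcdn (kappa d r t) (mord (3 * p) r)
             & gcdn (r ^ (l * kappa d r t) - 1) (3 * p) == d].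

Definition Delta (m : nat) : pred nat :=
  fun l => [&& 0 < l, l < m & l %| m].

From mathcomp Require Import all_boot.
From mathcomp Require cyclic.
From mathcomp Require Import zify.

Set Implicit Arguments.
Unset Strict Implicit.
Unset Printing Implicit Defensive.

(* Write n = |r|_p and k = kappa(3,r,t).  By the Chinese remainder theorem,
   gcd(r^(lk) - 1, 3p) = 3 exactly when |r|_3 divides lk and n does not.  In
   all three cases |r|_3 divides k (k is 1, 3 and 2 respectively), so the gcd
   condition reduces to "n/gcd(k,n) does not divide l", while the condition
   l | |r|_(3p)/gcd(k,|r|_(3p)), with |r|_(3p) = lcm(|r|_3, n), reduces to
   l | n/gcd(k,n).  Hence Lambda(3,r,t) consists of the proper divisors of
   n/gcd(k,n), and it remains to compute k. *)

Lemma expn_eq1_mod m x q : x = 1 %[mod m] -> x ^ q = 1 %[mod m].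
Proof. by move=> x1; rewrite -modnXm x1 modnXm exp1n. Qed.

Lemma totient_leq m : totient m <= m.
Proof.
rewrite totient_count_coprime.
apply: (@leq_trans (\sum_(0 <= d < m) 1)); first by apply: leq_sum => i _; apply: leq_b1.
by rewrite sum_nat_const_nat subn0 muln1.
Qed.

Section MultiplicativeOrder.

Variables (m r : nat).
Hypotheses (m_gt0 : 0 < m) (coprime_rm : coprime r m).

Let period k := r ^ k.+1 == 1 %[mod m].

Let has_period : has period (iota 0 m).
Proof.
apply/hasP; exists (totient m).-1.
  by rewrite mem_iota add0n; have := totient_leq m; have := totient_gt0 m; rewrite m_gt0; lia.
by rewrite /period prednK ?totient_gt0 //; apply/eqP; apply: cyclic.Euler_exp_totient.
Qed.

Lemma expn_mord_mod : r ^ mord m r = 1 %[mod m].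
Proof.
apply/eqP; have := nth_find 0 has_period.
by rewrite nth_iota ?add0n // -{2}(size_iota 0 m) -has_find.
Qed.

Lemma expn_mod_neq1_ltn_mord j : 0 < j < mord m r -> r ^ j != 1 %[mod m].
Proof.
case/andP=> j_gt0 lt_j_mord; rewrite -(prednK j_gt0).
have lt_j_find : j.-1 < find period (iota 0 m) by rewrite /mord -/period in lt_j_mord; lia.
have lt_j_m : j.-1 < m by have := find_size period (iota 0 m); rewrite size_iota; lia.
by have := before_find 0 lt_j_find; rewrite nth_iota // add0n /period => ->.
Qed.

Lemma expn_mod_eq1 k : (r ^ k == 1 %[mod m]) = (mord m r %| k).
Proof.
apply/idP/idP => [/eqP rk1 | /dvdnP [q ->]]; last first.
  by rewrite mulnC expnM; apply/eqP/expn_eq1_mod/expn_mord_mod.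
have rkmod1 : r ^ (k %% mord m r) = 1 %[mod m].
  move: rk1; rewrite {1}(divn_eq k (mord m r)) expnD (mulnC (k %/ _)) expnM.
  by rewrite -modnMml (expn_eq1_mod _ expn_mord_mod) modnMml mul1n.
apply: contraT; rewrite /dvdn => k_mod_neq0.
have := @expn_mod_neq1_ltn_mord (k %% mord m r).
by rewrite lt0n k_mod_neq0 ltn_pmod // rkmod1 eqxx => /(_ isT).
Qed.

End MultiplicativeOrder.

Lemma mord_mod1 m r : r %% m = 1 -> mord m r = 1.
Proof. by case: m => [|[|m]] r1; rewrite /mord //= ?modn1 // expn1 r1 modn_small. Qed.

Lemma mord3_mod2 r : r %% 3 = 2 -> mord 3 r = 2.
Proof. by move=> r2; rewrite /mord /= expn1 r2 -modnXm r2. Qed.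

Lemma mord_mul m n r : 0 < m -> 0 < n -> coprime m n -> coprime r (m * n) ->
  mord (m * n) r = lcmn (mord m r) (mord n r).
Proof.
move=> m_gt0 n_gt0 co_mn co_rmn; move: (co_rmn); rewrite coprimeMr => /andP [co_rm co_rn].
have mord_dvdP k : (mord (m * n) r %| k) = (mord m r %| k) && (mord n r %| k).
  by rewrite -!expn_mod_eq1 ?muln_gt0 ?m_gt0 // chinese_remainder.
by apply/eqP; rewrite eqn_dvd mord_dvdP dvdn_lcml dvdn_lcmr dvdn_lcm -mord_dvdP dvdnn.
Qed.

Lemma gcdn_mul_prime_eq a q p : prime p -> coprime q p ->
  (gcdn a (q * p) == q) = (q %| a) && ~~ (p %| a).
Proof.
move=> p_pr co_qp; have [p_dvd_a | p_ndvd_a] := boolP (p %| a); rewrite ?andbF ?andbT.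
  apply/negP => /eqP gcd_q; have /negP[] : ~~ (p %| q) by rewrite -prime_coprime // coprime_sym.
  by rewrite -gcd_q dvdn_gcd p_dvd_a dvdn_mull.
have co_ap : coprime a p by rewrite coprime_sym prime_coprime.
by rewrite mulnC Gauss_gcdr //; apply: (sameP eqP gcdn_idPr).
Qed.

Lemma coprime_3_prime p : prime p -> 3 < p -> coprime 3 p.
Proof. by move=> p_pr p_gt3; rewrite coprime_sym prime_coprime //; apply/negP => /dvdn_leq; lia. Qed.

Lemma gcd_expn_sub1_3p p r x : prime p -> 3 < p -> 0 < r -> coprime r (3 * p) ->
  (gcdn (r ^ x - 1) (3 * p) == 3) = (mord 3 r %| x) && ~~ (mord p r %| x).
Proof.
move=> p_pr p_gt3 r_gt0; rewrite coprimeMr => /andP [co_r3 co_rp].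
rewrite gcdn_mul_prime_eq ?coprime_3_prime // -!eqn_mod_dvd ?expn_gt0 ?r_gt0 //.
by rewrite !expn_mod_eq1 // prime_gt0.
Qed.

Lemma dvdn_mul_divgcd n k l : 0 < k -> (n %| l * k) = (n %/ gcdn k n %| l).
Proof.
move=> k_gt0; set g := gcdn k n; have g_gt0 : 0 < g by rewrite gcdn_gt0 k_gt0.
have [n_eq k_eq] : n = n %/ g * g /\ k = k %/ g * g by rewrite !divnK ?dvdn_gcdr ?dvdn_gcdl.
have co : coprime (n %/ g) (k %/ g).
  by rewrite /coprime -(eqn_pmul2r g_gt0) muln_gcdl -n_eq -k_eq mul1n gcdnC.
by rewrite {1}n_eq {1}k_eq mulnA dvdn_pmul2r // Gauss_dvdl.
Qed.

Lemma divn_gcd_lcm a k n : 0 < k -> a %| k ->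
  lcmn a n %/ gcdn k (lcmn a n) = n %/ gcdn k n.
Proof.
move=> k_gt0 a_dvd_k.
have same_dvd l : (lcmn a n %/ gcdn k (lcmn a n) %| l) = (n %/ gcdn k n %| l).
  by rewrite -!dvdn_mul_divgcd // dvdn_lcm dvdn_mull.
by apply/eqP; rewrite eqn_dvd same_dvd dvdnn -same_dvd dvdnn.
Qed.

Lemma Lambda3E p r t : prime p -> 3 < p -> 0 < r -> coprime r (3 * p) ->
  0 < kappa 3 r t -> mord 3 r %| kappa 3 r t ->
  Lambda p 3 r t =i Delta (mord p r %/ gcdn (kappa 3 r t) (mord p r)).
Proof.
move=> p_pr p_gt3 r_gt0 co_r3p k_gt0 mord3_dvd_k l; have p_gt0 := prime_gt0 p_pr.
rewrite /Lambda /Delta -!topredE /= (@mord_mul 3 p r) ?coprime_3_prime //.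
rewrite divn_gcd_lcm // gcd_expn_sub1_3p // dvdn_mull //= dvdn_mul_divgcd //.
set N := _ %/ _; have N_gt0 : 0 < N by rewrite divn_gt0 ?gcdn_gt0 ?k_gt0 // dvdn_leq ?dvdn_gcdr.
case: l => [|l] //=; case: (boolP (l.+1 %| N)) => l_dvd_N; rewrite ?andbF //=.
by rewrite andbT ltn_neqAle dvdn_leq // andbT eqn_dvd l_dvd_N.
Qed.

Lemma Ssum1 x : Ssum 1 x = 1.
Proof. by rewrite /Ssum big_ord1. Qed.

Lemma Ssum2 x : Ssum 2 x = 1 + x.
Proof. by rewrite /Ssum big_ord_recr big_ord1 expn1. Qed.

Lemma kappa3_mod1 r t : r %% 3 = 1 -> kappa 3 r t = 3 %/ gcdn 3 t.
Proof. by move=> r1; rewrite /kappa mord_mod1 // Ssum1 !muln1. Qed.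

Lemma kappa3_mod2 r t : r %% 3 = 2 -> kappa 3 r t = 2.
Proof.
move=> r2; rewrite /kappa mord3_mod2 // Ssum2.
suff /gcdn_idPl -> : 3 %| t * (1 + r) by [].
by rewrite dvdn_mull // /dvdn -modnDmr r2.
Qed.

Theorem lemma5p3 (p t r : nat) :
  prime p -> 3 < p ->
  t \in [:: 1; 3; p; 3 * p] ->
  1 <= r <= 3 * p - 1 ->
  coprime r (3 * p) ->
  [/\ (r %% 3 = 1 -> t \in [:: 3; 3 * p] ->
         Lambda p 3 r t =i Delta (mord p r)),
      (r %% 3 = 1 -> t \in [:: 1; p] ->
         Lambda p 3 r t =i Delta (mord p r %/ gcdn 3 (mord p r)))
    & (r %% 3 = 2 ->
         Lambda p 3 r t =i Delta (mord p r %/ gcdn 2 (mord p r)))].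
Proof.
move=> p_pr p_gt3 _ /andP [r_gt0 _] co_r3p.
have Lambda3_Delta := @Lambda3E p r t p_pr p_gt3 r_gt0 co_r3p.
split=> [r1 t_in | r1 t_in | r2] l.
- have k1 : kappa 3 r t = 1.
    by rewrite kappa3_mod1 //; move: t_in; rewrite !inE => /orP [] /eqP ->; rewrite ?gcdnMr.
  by rewrite Lambda3_Delta k1 ?gcd1n ?divn1 // (mord_mod1 r1).
- have k3 : kappa 3 r t = 3.
    rewrite kappa3_mod1 //; move: t_in; rewrite !inE => /orP [] /eqP -> //.
    by rewrite (eqP (coprime_3_prime p_pr p_gt3)).
  by rewrite Lambda3_Delta k3 // (mord_mod1 r1).
- by rewrite Lambda3_Delta kappa3_mod2 // mord3_mod2.
Qed.
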